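(* Let $k,n$ be integers with $k\geq 3$ and $n\geq 2$, and let $c$ be an exact $k$-coloring of $\mathcal{B}_n$. Then $\mathcal{B}_n$ contains no rainbow induced copy of $\vee_2$ if and only if one of the following holds: (1) There exists a set $A\subseteq[n]$ with $|A|\leq n-2$ such that each of the three families $\mathcal{B}_{(A,[n])}$, $\mathcal{B}_n\setminus\mathcal{B}_{[A,[n]]}$, and $\{A\}$ is monochromatic, and no two sets from different ones of these families share a color; moreover, if $k=3$ the color of $[n]$ is unrestricted, and if $k=4$ then $[n]$ receives a color different from all colors used on $\mathcal{B}_{[\emptyset,[n])}$. (2) Exactly two colors appear on $\mathcal{B}_{[\emptyset,[n])}$, and $[n]$ receives a color distinct from these two.
   Context: $\mathcal{B}_n$ denotes the Boolean lattice of all subsets of $[n]$ ordered by inclusion. For $X\subseteq Y$: $\mathcal{B}_{[X,Y]}=\{Z: X\subseteq Z\subseteq Y\}$, $\mathcal{B}_{(X,Y]}=\{Z:X\subsetneq Z\subseteq Y\}$, $\mathcal{B}_{[X,Y)}=\{Z:X\subseteq Z\subsetneq Y\}$, $\mathcal{B}_{(X,Y)}=\{Z:X\subsetneq Z\subsetneq Y\}$. An exact $k$-coloring is a surjective map $\mathcal{B}_n\to[k]$. $\vee_2$ is the poset $\{X_0,X_1,X_2\}$ with $X_0<X_1$, $X_0<X_2$, $X_1,X_2$ incomparable; a rainbow induced copy of $\vee_2$ is three sets $X_0\subsetneq X_1$, $X_0\subsetneq X_2$ with $X_1,X_2$ incomparable and pairwise distinct colors. *)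

From mathcomp Require Import all_boot.
Set Implicit Arguments. Unset Strict Implicit. Unset Printing Implicit Defensive.

(* The Boolean lattice B_n is {set 'I_n}; colors are 'I_k (= [k]). *)

Definition exact_coloring (n k : nat) (c : {set 'I_n} -> 'I_k) : Prop :=
  forall i : 'I_k, exists Z : {set 'I_n}, c Z = i.

Definition rainbow_V2 (n k : nat) (c : {set 'I_n} -> 'I_k) : Prop :=
  exists X0 X1 X2 : {set 'I_n},
    [/\ X0 \proper X1, X0 \proper X2, ~~ (X1 \subset X2), ~~ (X2 \subset X1)
      & [/\ c X0 != c X1, c X0 != c X2 & c X1 != c X2]].

Definition monochromatic (n k : nat) (c : {set 'I_n} -> 'I_k)
  (F : {set 'I_n} -> bool) : Prop :=
  forall X Y, F X -> F Y -> c X = c Y.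

Definition color_disjoint (n k : nat) (c : {set 'I_n} -> 'I_k)
  (F G : {set 'I_n} -> bool) : Prop :=
  forall X Y, F X -> G Y -> c X != c Y.

Definition famB1 n (A : {set 'I_n}) (Z : {set 'I_n}) : bool :=
  (A \proper Z) && (Z \proper setT).
Definition famB2 n (A : {set 'I_n}) (Z : {set 'I_n}) : bool :=
  ~~ (A \subset Z).
Definition famB3 n (A : {set 'I_n}) (Z : {set 'I_n}) : bool :=
  Z == A.

Definition condition1 (n k : nat) (c : {set 'I_n} -> 'I_k) : Prop :=
  exists A : {set 'I_n},
    [/\ #|A| <= n - 2,
        [/\ monochromatic c (famB1 A), monochromatic c (famB2 A) & monochromatic c (famB3 A)],
        [/\ color_disjoint c (famB1 A) (famB2 A),
            color_disjoint c (famB1 A) (famB3 A)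
          & color_disjoint c (famB2 A) (famB3 A)]
      & (k = 4 -> forall Z : {set 'I_n}, Z != setT -> c setT != c Z)].

Definition proper_colors (n k : nat) (c : {set 'I_n} -> 'I_k) : {set 'I_k} :=
  [set c Z | Z in [set Z : {set 'I_n} | Z != setT]].

Definition condition2 (n k : nat) (c : {set 'I_n} -> 'I_k) : Prop :=
  #|proper_colors c| = 2 /\ c setT \notin proper_colors c.

From mathcomp Require Import all_boot.
Set Implicit Arguments. Unset Strict Implicit. Unset Printing Implicit Defensive.

(* Let g be the color of the empty set.  Without a rainbow V_2, two
   incomparable sets whose colors differ from g have the same color; likewise
   two incomparable proper supersets W, V of a set A of color other than g,
   as soon as c W is neither g nor c A.  If three colors occur below [n], let
   A be inclusion-minimal among the sets of color other than g and Z0 a set of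
   a third color.  Then A is strictly below Z0, the color of Z0 spreads to
   every A + r and from there to every set strictly between A and [n], and
   every set not containing A has color g: this is condition (1).  Otherwise
   exactly two colors occur below [n], and surjectivity puts a third one on
   [n]: condition (2). *)

Lemma nsubset_neqT (T : finType) (X Y : {set T}) :
  ~~ (Y \subset X) -> X != setT.
Proof. by apply: contraNneq => ->; exact: subsetT. Qed.

Lemma proper_setU1 (T : finType) (A : {set T}) x :
  x \notin A -> A \proper x |: A.
Proof. by move=> xA; apply: properUr; rewrite sub1set. Qed.

Lemma incomparable_setU1 (T : finType) (A W : {set T}) w r :
  w \in W -> w \notin A -> r \notin W ->
  ~~ (r |: A \subset W) /\ ~~ (W \subset r |: A).
Proof.
move=> wW wA rW; split; apply/subsetPn.
- by exists r; rewrite ?setU11.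
- exists w => //; rewrite in_setU1 negb_or wA andbT.
  by apply: contraNneq rW => <-.
Qed.

Lemma card_set3_le (T : finType) (a b d : T) : #|[set a; b; d]| <= 3.
Proof. by rewrite setUC cardsU1 cards2; case: (_ \notin _); case: (_ != _). Qed.

Section BooleanLatticeColoring.

Variables (n k : nat) (c : {set 'I_n} -> 'I_k).

Lemma mem_proper_colors (Z : {set 'I_n}) : Z != setT -> c Z \in proper_colors c.
Proof. by move=> ZT; apply/imsetP; exists Z; rewrite ?inE. Qed.

Lemma proper_colors_sub (S : {set 'I_k}) :
  (forall Z : {set 'I_n}, Z != setT -> c Z \in S) -> proper_colors c \subset S.
Proof.
by move=> cS; apply/subsetP => i /imsetP[Z]; rewrite inE => /cS Sc ->.
Qed.

Lemma exact_coloring_colors :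
  exact_coloring c -> c setT |: proper_colors c = setT.
Proof.
move=> exact_c; apply/eqP; rewrite -subTset; apply/subsetP => i _.
have [Z <-] := exact_c i; rewrite in_setU1.
by have [->|/mem_proper_colors ->] := eqVneq Z setT; rewrite ?eqxx ?orbT.
Qed.

Lemma exact_coloring_card : exact_coloring c -> k <= #|proper_colors c|.+1.
Proof.
move=> /exact_coloring_colors colorsE.
by rewrite -[X in X <= _]card_ord -cardsT -colorsE cardsU1; case: (_ \notin _).
Qed.

Lemma exact_coloring_top_fresh :
  exact_coloring c -> #|proper_colors c| < k -> c setT \notin proper_colors c.
Proof.
move=> /exact_coloring_colors colorsE; apply: contraTN => topP.
by rewrite -leqNgt -[X in X <= _]card_ord -cardsT -colorsE cardsU1 topP.
Qed.

Lemma exists_proper_color_neq0 :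
  3 <= k -> exact_coloring c -> exists2 X, X != setT & c X != c set0.
Proof.
move=> k3 exact_c.
have [X /andP[XT cX] | only0] :=
  pickP [pred X | (X != setT) && (c X != c set0)]; first by exists X.
have : proper_colors c \subset [set c set0].
  apply: proper_colors_sub => Z ZT; have := only0 Z.
  by rewrite /= ZT => /negbFE /eqP ->; exact: set11.
move/subset_leq_card; rewrite cards1 => P1.
have := leq_trans k3 (exact_coloring_card exact_c).
by rewrite ltnS => /leq_trans/(_ P1).
Qed.

Lemma condition2_of_pair a b :
  3 <= k -> exact_coloring c -> a != b ->
  a \in proper_colors c -> b \in proper_colors c ->
  proper_colors c \subset [set a; b] -> condition2 c.
Proof.
move=> k3 exact_c ab aP bP Pab.
have PE : proper_colors c = [set a; b].
  by apply/eqP; rewrite eqEsubset Pab; apply/subsetP => i /set2P[]->.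
have P2 : #|proper_colors c| = 2 by rewrite PE cards2 ab.
by split=> //; apply: exact_coloring_top_fresh; rewrite ?P2.
Qed.

Lemma condition2_no_rainbow : condition2 c -> ~ rainbow_V2 c.
Proof.
move=> [P2 _] [X0 [X1 [X2 [X01 _ X12 X21 [c01 c02 c12]]]]].
have X1T := nsubset_neqT X21; have X2T := nsubset_neqT X12.
have X0T : X0 != setT by rewrite -properT (proper_sub_trans X01) ?subsetT.
have /cards2P[a [b [_ PE]]] : #|proper_colors c| == 2 by apply/eqP.
move: c01 c02 c12; have := mem_proper_colors X2T; have := mem_proper_colors X1T.
have := mem_proper_colors X0T.
by rewrite PE => /set2P[]-> /set2P[]-> /set2P[]->; rewrite ?eqxx.
Qed.

Lemma condition1_no_rainbow : condition1 c -> ~ rainbow_V2 c.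
Proof.
move=> [A [_ [monoB1 monoB2 _] _ _]].
move=> [X0 [X1 [X2 [X01 X02 X12 X21 [c01 c02 c12]]]]].
have X1T := nsubset_neqT X21; have X2T := nsubset_neqT X12.
have B1 (X : {set 'I_n}) : A \proper X -> X != setT -> famB1 A X.
  by move=> AX XT; rewrite /famB1 properT AX XT.
have [AX0|AX0] := boolP (A \subset X0).
  by rewrite (monoB1 X1 X2) ?eqxx ?B1 ?(sub_proper_trans AX0) in c12.
have above (X : {set 'I_n}) : c X0 != c X -> A \subset X.
  by apply: contraTT => AX; rewrite negbK (monoB2 X0 X).
have AX1 := above X1 c01; have AX2 := above X2 c02.
have X1A : X1 != A by apply: contraNneq X12 => ->.
have X2A : X2 != A by apply: contraNneq X21 => ->.
have ltAX1 : A \proper X1 by rewrite properEneq eq_sym X1A AX1.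
have ltAX2 : A \proper X2 by rewrite properEneq eq_sym X2A AX2.
by rewrite (monoB1 X1 X2) ?eqxx ?B1 in c12.
Qed.

Section NoRainbow.

Hypothesis no_rainbow : ~ rainbow_V2 c.

Lemma no_rainbow_color_eq (X0 X1 X2 : {set 'I_n}) :
  X0 \proper X1 -> X0 \proper X2 -> ~~ (X1 \subset X2) -> ~~ (X2 \subset X1) ->
  c X0 != c X1 -> c X0 != c X2 -> c X1 = c X2.
Proof.
move=> X01 X02 X12 X21 c01 c02; apply/eqP; apply: contraT => c12.
by exfalso; apply: no_rainbow; exists X0, X1, X2.
Qed.

Lemma incomparable_color_eq (X Y : {set 'I_n}) :
  ~~ (X \subset Y) -> ~~ (Y \subset X) ->
  c X != c set0 -> c Y != c set0 -> c X = c Y.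
Proof.
have nonempty (Z : {set 'I_n}) : c Z != c set0 -> set0 \proper Z.
  by rewrite proper0; apply: contraNneq => ->.
move=> XY YX cX cY.
apply: (no_rainbow_color_eq (nonempty X cX) (nonempty Y cY)) => //.
all: by rewrite eq_sym.
Qed.

Lemma incomparable_above_color_eq (A W V : {set 'I_n}) :
  c A != c set0 -> A \proper W -> A \proper V ->
  ~~ (W \subset V) -> ~~ (V \subset W) ->
  c W != c set0 -> c W != c A -> c V = c W.
Proof.
move=> cA AW AV WV VW cW cWA.
have [cV|cV] := eqVneq (c V) (c set0); last exact: incomparable_color_eq.
have cAW : c A != c W by rewrite eq_sym.
have cAV : c A != c V by rewrite cV.
have cWV := no_rainbow_color_eq AW AV WV VW cAW cAV.
by rewrite cWV cV eqxx in cW.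
Qed.

Section MinimalColoredSet.

Variables A Z0 : {set 'I_n}.
Hypotheses (cA : c A != c set0)
  (A_minimal : forall D : {set 'I_n}, D \proper A -> c D = c set0).
Hypotheses (Z0T : Z0 != setT) (cZ0 : c Z0 != c set0) (cZ0A : c Z0 != c A).

Lemma proper_A_Z0 : A \proper Z0.
Proof.
have [Z0A|Z0A] := boolP (Z0 \subset A).
  have [eqZ0A|ltZ0A] := eqVproper Z0A; first by move: cZ0A; rewrite eqZ0A eqxx.
  by move: cZ0; rewrite A_minimal ?eqxx.
have [AZ0|AZ0] := boolP (A \subset Z0); first by rewrite properE AZ0.
by move: cZ0A; rewrite (incomparable_color_eq AZ0 Z0A) ?eqxx.
Qed.

Lemma card_A_lt : #|A|.+2 <= n.
Proof.
have Z0p : Z0 \proper setT by rewrite properT.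
have := proper_card Z0p; rewrite cardsT card_ord.
exact: leq_ltn_trans (proper_card proper_A_Z0).
Qed.

Lemma color_setU1 (r : 'I_n) : r \notin A -> c (r |: A) = c Z0.
Proof.
have [_ [z zZ0 zA]] := properP proper_A_Z0.
have outside x : x \notin A -> x \notin Z0 -> c (x |: A) = c Z0.
  move=> xA xZ0; have [AxZ0 Z0Ax] := incomparable_setU1 zZ0 zA xZ0.
  exact: (incomparable_above_color_eq cA proper_A_Z0 (proper_setU1 xA)).
move=> rA; have [rZ0|] := boolP (r \in Z0); last exact: outside.
have /subsetPn[s _ sZ0] : ~~ (setT \subset Z0) by rewrite subTset.
have sA : s \notin A := contra (subsetP (proper_sub proper_A_Z0) s) sZ0.
have cs := outside s sA sZ0.
have rs : r \notin s |: A.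
  by rewrite in_setU1 negb_or rA andbT; apply: contraTneq rZ0 => ->.
have [rAsA sArA] := incomparable_setU1 (setU11 s A) sA rs.
by rewrite (incomparable_above_color_eq cA (proper_setU1 sA) (proper_setU1 rA)
  sArA rAsA) ?cs.
Qed.

Lemma color_above (W : {set 'I_n}) : A \proper W -> W != setT -> c W = c Z0.
Proof.
move=> AW WT; have [_ [w wW wA]] := properP AW.
have /subsetPn[r _ rW] : ~~ (setT \subset W) by rewrite subTset.
have rA : r \notin A := contra (subsetP (proper_sub AW) r) rW.
have [rAW WrA] := incomparable_setU1 wW wA rW.
by rewrite (incomparable_above_color_eq cA (proper_setU1 rA) AW rAW WrA)
  ?color_setU1.
Qed.

Lemma color_not_above (D : {set 'I_n}) : ~~ (A \subset D) -> c D = c set0.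
Proof.
move=> AD; have [DA|DA] := boolP (D \subset A).
  by apply: A_minimal; rewrite properE DA.
apply/eqP; apply: contraT => cD; have /subsetPn[d dD dA] := DA.
have AW : A \proper [set~ d].
  rewrite properEcard cardsC1 card_ord; apply/andP; split.
    by apply/subsetP => x xA; rewrite in_setC1; apply: contraTneq xA => ->.
  by rewrite ltn_predRL card_A_lt.
have WD : ~~ ([set~ d] \subset D).
  by apply: contra AD; apply: subset_trans (proper_sub AW).
have DW : ~~ (D \subset [set~ d]) by apply/subsetPn; exists d; rewrite ?setC11.
have cW := color_above AW (nsubset_neqT DW).
have cDA := incomparable_color_eq DA AD cD cA.
have cDZ0 : c D = c [set~ d] by apply: incomparable_color_eq; rewrite ?cW.
by move: cZ0A; rewrite -cW -cDZ0 cDA eqxx.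
Qed.

Lemma proper_colors3 (Y : {set 'I_n}) :
  Y != setT -> c Y \in [set c set0; c A; c Z0].
Proof.
move=> YT; rewrite !inE; have [AY|AY] := boolP (A \subset Y).
  have [<-|AY'] := eqVproper AY; first by rewrite eqxx orbT.
  by rewrite color_above ?eqxx ?orbT.
by rewrite color_not_above ?eqxx.
Qed.

Lemma condition1_of_minimal : exact_coloring c -> condition1 c.
Proof.
move=> exact_c.
have B1 (X : {set 'I_n}) : famB1 A X -> c X = c Z0.
  by case/andP=> AX; rewrite properT; exact: color_above.
have B2 (X : {set 'I_n}) : famB2 A X -> c X = c set0 := @color_not_above X.
have B3 (X : {set 'I_n}) : famB3 A X -> c X = c A by move/eqP->.
exists A; split.
- by rewrite leq_subRL ?add2n ?card_A_lt // (leq_trans _ card_A_lt).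
- by split=> X Y;
    [move=> /B1-> /B1-> | move=> /B2-> /B2-> | move=> /B3-> /B3->].
- split=> X Y;
    [move=> /B1-> /B2-> | move=> /B1-> /B3-> | move=> /B2-> /B3->] => //.
  by rewrite eq_sym.
move=> k4 Z ZT.
have : #|proper_colors c| < k.
  rewrite [X in _ < X]k4 ltnS.
  apply: leq_trans (card_set3_le (c set0) (c A) (c Z0)).
  exact/subset_leq_card/proper_colors_sub/proper_colors3.
move/(exact_coloring_top_fresh exact_c); apply: contraNneq => ->.
exact: mem_proper_colors.
Qed.

End MinimalColoredSet.

End NoRainbow.

End BooleanLatticeColoring.

Lemma no_rainbow_conditions n k (c : {set 'I_n} -> 'I_k) :
  3 <= k -> exact_coloring c -> ~ rainbow_V2 c -> condition1 c \/ condition2 c.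
Proof.
move=> k3 exact_c no_rainbow.
have [X XT cX] := exists_proper_color_neq0 k3 exact_c.
pose P := [pred Z : {set 'I_n} | (Z != setT) && (c Z != c set0)].
have PX : P X by rewrite inE XT cX.
case: (arg_minnP (fun Z : {set 'I_n} => #|Z|) PX) => A /andP[AT cA] A_min.
have A_minimal (D : {set 'I_n}) : D \proper A -> c D = c set0.
  move=> DA; apply/eqP; apply: contraTT (proper_card DA) => cD.
  by rewrite -leqNgt A_min // inE cD -properT (proper_sub_trans DA) ?subsetT.
have [Z0 /and3P[Z0T cZ0 cZ0A] | two] :=
  pickP [pred Z | [&& Z != setT, c Z != c set0 & c Z != c A]].
  by left; exact: (condition1_of_minimal no_rainbow cA A_minimal Z0T cZ0 cZ0A).
right; apply: (condition2_of_pair (a := c set0) (b := c A) k3 exact_c).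
- by rewrite eq_sym.
- apply: mem_proper_colors.
  by rewrite -properT (sub_proper_trans (sub0set A)) ?properT.
- exact: mem_proper_colors.
apply: proper_colors_sub => Z ZT; have := two Z; rewrite /= ZT /= !inE.
by case: eqP => //= _ /negbFE.
Qed.

Theorem theorem2p3 (k n : nat) (c : {set 'I_n} -> 'I_k) :
  3 <= k -> 2 <= n -> exact_coloring c ->
  (~ rainbow_V2 c <-> (condition1 c \/ condition2 c)).
Proof.
move=> k3 _ exact_c; split; first exact: no_rainbow_conditions.
by case; [exact: condition1_no_rainbow | exact: condition2_no_rainbow].
Qed.
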